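(* Let $f:\mathbb{Z}^n\to\mathbb{R}\cup\{+\infty\}$ be a function satisfying condition (SSQM$^\natural$). A vector $x^*\in\mathrm{dom}\,f$ is a minimizer of $f$ if and only if $$f(x^*-\chi_i+\chi_j)\ge f(x^* )\qquad\text{for all } i,j\in N\cup\{0\}.$$
   Context: $N=\{1,\dots,n\}$. For $i\in N$, $\chi_i\in\{0,1\}^n$ is the characteristic vector of $i$, and $\chi_0=0$. $\mathrm{dom}\,f=\{x\in\mathbb{Z}^n\mid f(x)<+\infty\}$. For $x,y\in\mathbb{Z}^n$, $\mathrm{supp}^+(x-y)=\{i\in N\mid x(i)>y(i)\}$ and $\mathrm{supp}^-(x-y)=\{j\in N\mid x(j)<y(j)\}$. Condition (SSQM$^\natural$): for all $x,y\in\mathrm{dom}\,f$ and all $i\in\mathrm{supp}^+(x-y)$ there exists $j\in\mathrm{supp}^-(x-y)\cup\{0\}$ such that at least one of the following holds: (a) $f(x-\chi_i+\chi_j)<f(x)$; (b) $f(y+\chi_i-\chi_j)<f(y)$; (c) $f(x-\chi_i+\chi_j)=f(x)$ and $f(y+\chi_i-\chi_j)=f(y)$. A function satisfying (SSQM$^\natural$) is called semi-strictly quasi M$^\natural$-convex. *)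

(* values in extended reals \bar R (R : realType), with
   the explicit hypothesis that f never takes the value -oo, so that f maps
   into R ∪ {+oo}.  Vectors of Z^n are functions 'I_n -> int. *)
From mathcomp Require Import all_boot all_order all_algebra.
From mathcomp Require Import reals constructive_ereal.
Set Implicit Arguments. Unset Strict Implicit. Unset Printing Implicit Defensive.
Import Order.TTheory GRing.Theory Num.Theory.
Local Open Scope ring_scope.

Definition zvec (n : nat) := 'I_n -> int.

(* characteristic vector chi_j for j in N ∪ {0}; None encodes 0 (chi_0 = 0) *)
Definition chi (n : nat) (j : option 'I_n) : zvec n :=
  fun k => if j == Some k then 1 else 0.

Definition shift (n : nat) (x : zvec n) (i j : option 'I_n) : zvec n :=
  fun k => x k - chi i k + chi j k.

Local Open Scope ereal_scope.

Definition in_dom (R : realType) (n : nat) (f : zvec n -> \bar R) (x : zvec n) :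
  Prop := f x < +oo.

Definition SSQM (R : realType) (n : nat) (f : zvec n -> \bar R) : Prop :=
  forall x y : zvec n, in_dom f x -> in_dom f y ->
  forall i : 'I_n, (y i < x i)%R ->
  exists j : option 'I_n,
    (match j with None => True | Some j' => (x j' < y j')%R end) /\
    [\/ f (shift x (Some i) j) < f x,
        f (shift y j (Some i)) < f y
      | f (shift x (Some i) j) = f x /\ f (shift y j (Some i)) = f y].

Definition minimizer (R : realType) (n : nat) (f : zvec n -> \bar R) (x : zvec n) :
  Prop := in_dom f x /\ forall y : zvec n, f x <= f y.

(* Local optimality is clearly necessary.  Conversely, let x be locally
   optimal and suppose f y < f x for some y.  Apply (SSQM^natural) to the pair
   (x, y) or (y, x) at a coordinate k where they differ.  The alternative "f
   decreases strictly at x" is excluded by local optimality, and each of the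
   remaining ones yields a point y' = y + chi_k - chi_j or y - chi_k + chi_j,
   one step closer to x in the l1 distance, with f y' <= f y < f x.  Iterating
   contradicts the well-foundedness of the distance. *)
From mathcomp Require Import all_boot all_order all_algebra.
From mathcomp Require Import reals constructive_ereal.
From mathcomp Require Import zify.
From Stdlib Require Import FunctionalExtensionality.
Set Implicit Arguments. Unset Strict Implicit. Unset Printing Implicit Defensive.
Import Order.TTheory GRing.Theory Num.Theory.
Local Open Scope ring_scope.

Lemma leq_ltn_sum (I : finType) (F G : I -> nat) (i : I) :
  (forall k, F k <= G k)%N -> (F i < G i)%N -> (\sum_k F k < \sum_k G k)%N.
Proof.
move=> leFG ltFGi; rewrite (bigD1 i) // [ltnRHS](bigD1 i) //=.
by rewrite -addSn leq_add // leq_sum.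
Qed.

Lemma no_infinite_descent (T : Type) (mu : T -> nat) (P : T -> Prop) :
  (forall y, P y -> exists2 y', (mu y' < mu y)%N & P y') -> forall y, ~ P y.
Proof.
move=> descent y; have [m] := ubnP (mu y); elim: m y => // m IHm y lt_y Py.
by have [y' lt_y' Py'] := descent y Py; apply: (IHm y') => //; exact: leq_trans lt_y' lt_y.
Qed.

Definition l1_dist (n : nat) (a b : zvec n) : nat := (\sum_k `|a k - b k|)%N.

Section ShiftToward.

Variables (n : nat) (a b : zvec n) (p q : option 'I_n).
Hypotheses (p_above : if p is Some k then is_true (b k < a k) else True)
           (q_below : if q is Some k then is_true (a k < b k) else True).

Lemma absz_shift_sub_le k : (`|shift a p q k - b k| <= `|a k - b k|)%N.
Proof.
rewrite /shift /chi; case: p p_above => [i|] lt_i; case: q q_below => [j|] lt_j;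
  rewrite ?eqE /=; do ?case: eqP => [?|_]; subst; lia.
Qed.

Lemma absz_shift_sub_lt k : p = Some k \/ q = Some k ->
  (`|shift a p q k - b k| < `|a k - b k|)%N.
Proof.
rewrite /shift /chi; case: p p_above => [i|] lt_i; case: q q_below => [j|] lt_j;
  case=> // -[<-]; rewrite ?eqE /= ?eqxx; do ?case: eqP => [?|_]; subst; lia.
Qed.

Lemma l1_dist_shift_lt k : p = Some k \/ q = Some k ->
  (l1_dist (shift a p q) b < l1_dist a b)%N.
Proof.
move=> pq_k; apply: (leq_ltn_sum (i := k)); first exact: absz_shift_sub_le.
exact: absz_shift_sub_lt.
Qed.

End ShiftToward.

Local Open Scope ereal_scope.

Section LocalOptimality.

Variables (R : realType) (n : nat) (f : zvec n -> \bar R) (x : zvec n).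
Hypotheses (SSQM_f : SSQM f) (dom_x : in_dom f x)
           (x_locmin : forall i j, f x <= f (shift x i j)).

Lemma SSQM_descent y :
  f y < f x -> exists2 y', (l1_dist y' x < l1_dist y x)%N & f y' < f x.
Proof.
move=> lt_yx; have dom_y : in_dom f y := lt_trans lt_yx dom_x.
have [k neq_k] : exists k, y k != x k.
  case: (pickP (fun k => y k != x k)) => [k|eq_yx]; first by exists k.
  suff eq_y : y = x by move: lt_yx; rewrite eq_y ltxx.
  by apply: functional_extensionality => k; move/negbFE/eqP: (eq_yx k).
case: (ltgtP (y k) (x k)) => [lt_k|gt_k|eq_k]; last by rewrite eq_k eqxx in neq_k.
- have [j [j_above alt]] := SSQM_f dom_x dom_y lt_k.
  have le_y : f (shift y j (Some k)) <= f y.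
    case: alt => [lt_x|/ltW //|[_ ->] //].
    by move: (x_locmin (Some k) j); rewrite leNgt lt_x.
  exists (shift y j (Some k)); last exact: le_lt_trans le_y lt_yx.
  exact: (l1_dist_shift_lt (q := Some k) j_above lt_k (or_intror erefl)).
- have [j [j_below alt]] := SSQM_f dom_y dom_x gt_k.
  have le_y : f (shift y (Some k) j) <= f y.
    case: alt => [/ltW //|lt_x|[-> _] //].
    by move: (x_locmin j (Some k)); rewrite leNgt lt_x.
  exists (shift y (Some k) j); last exact: le_lt_trans le_y lt_yx.
  exact: (l1_dist_shift_lt (p := Some k) gt_k j_below (or_introl erefl)).
Qed.

End LocalOptimality.

Theorem theorem2p3 (R : realType) (n : nat) (f : zvec n -> \bar R)
  (f_noninf : forall x, f x <> -oo)
  (hf : SSQM f) (xs : zvec n) (hxs : in_dom f xs) :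
  minimizer f xs <->
  (forall i j : option 'I_n, f xs <= f (shift xs i j)).
Proof.
split=> [[_ min_xs] i j | xs_locmin]; first exact: min_xs.
split=> // y; rewrite leNgt; apply/negP.
exact: no_infinite_descent (SSQM_descent hf hxs xs_locmin) y.
Qed.
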